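(* Let $K$ be a virtual knot diagram and $n\geq 0$. Then $|C_n(K)|\geq \operatorname{span}V_K^n(t)$, where $\operatorname{span}$ denotes the difference between the highest and lowest exponents of $t$ occurring in the Laurent polynomial (in $t^{1/2}$) $V_K^n(t)$.
   Context: Virtual knot diagrams, real crossings with writhe $w(c)\in\{\pm1\}$, $w(K)=\sum_c w(c)$. Chord index: in the Gauss diagram (counterclockwise circle, one chord per real crossing directed from over- to under-preimage and signed by the writhe), for a chord $c$ let $r_\pm(c)$ (resp. $l_\pm(c)$) be the number of chords of sign $\pm$ whose endpoints interlace with those of $c$ and whose tail lies to the left (resp. right) of the arrow $c$ and head to the right (resp. left); $\mathrm{Ind}(c)=r_+(c)-r_-(c)-l_+(c)+l_-(c)$. For $n\geq 0$ let $C_n(K)=\{c \text{ real crossing}: \mathrm{Ind}(c)=kn \text{ for some } k\in\mathbb{Z}\}$. A state $S$ is obtained by smoothing every crossing of $C_n(K)$ by either the $0$-smoothing ($A$-smoothing of the Kauffman bracket) or the $1$-smoothing ($B$-smoothing), leaving all other crossings unchanged; $S$ is a virtual link diagram with $|S|$ components, and $\#_0,\#_1$ count the $0$- and $1$-smoothings used. $\langle K\rangle_n=\sum_S A^{\#_0-\#_1}(-A^2-A^{-2})^{|S|-1}$ and $V_K^n(t)=(-A^3)^{-w(K)}\langle K\rangle_n\big|_{A=t^{-1/4}}$. *)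

From HB Require Import structures.
From mathcomp Require Import all_boot all_order all_algebra.
Set Implicit Arguments. Unset Strict Implicit. Unset Printing Implicit Defensive.
Import Order.TTheory GRing.Theory Num.Theory.
Local Open Scope ring_scope.

(* Signed Gauss diagrams.  A virtual knot diagram with m real crossings is *)
(* encoded (Goussarov-Polyak-Viro) by its Gauss diagram: the 2m preimages *)
(* of the real crossings are the points 0,1,...,2m-1 placed on a circle in *)
(* counterclockwise order (= the orientation of the knot).  Crossing c     *)
(* gives an arrow from its over-preimage [gtail c] to its under-preimage   *)
(* [ghead c], with sign [gsign c] (true = +1, false = -1) = writhe of c.   *)
(* Virtual crossings are not recorded: they play no role in any of the    *)
(* quantities involved.                                                   *)
Record gauss_diagram := GaussDiagram {
  ncross : nat;
  gtail : 'I_ncross -> 'I_(ncross.*2);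
  ghead : 'I_ncross -> 'I_(ncross.*2);
  gsign : 'I_ncross -> bool }.
Unset Implicit Arguments.

Definition valid_gauss (G : gauss_diagram) : Prop :=
  injective (fun x : 'I_(ncross G) * bool =>
               if x.2 then @gtail G x.1 else @ghead G x.1).

Definition sign_int (b : bool) : int := if b then 1 else -1.

Definition writhe (G : gauss_diagram) : int :=
  \sum_(c : 'I_(ncross G)) sign_int (@gsign G c).

(* x lies on the open counterclockwise arc from a to b (positions mod N) *)
Definition in_arc (N : nat) (x a b : nat) : bool :=
  (0 < (x + N - a) %% N < (b + N - a) %% N)%N.

(* Contribution of chord d to Ind(c).  The right side of the arrow c is the *)
(* open ccw arc from tail c to head c, the left side the open ccw arc from  *)
(* head c to tail c.  d counts in r_(sign d) if its tail is on the left and *)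
(* its head on the right, in l_(sign d) in the opposite situation.          *)
Definition ind_contrib (G : gauss_diagram) (c d : 'I_(ncross G)) : int :=
  let N := (ncross G).*2 in
  let a := val (@gtail G c) in let b := val (@ghead G c) in
  let right x := in_arc N x a b in
  let left x := in_arc N x b a in
  if left (@gtail G d) && right (@ghead G d) then sign_int (@gsign G d)
  else if right (@gtail G d) && left (@ghead G d) then - sign_int (@gsign G d)
  else 0.

(* Ind(c) = r_+(c) - r_-(c) - l_+(c) + l_-(c) *)
Definition chord_index (G : gauss_diagram) (c : 'I_(ncross G)) : int :=
  \sum_(d | d != c) ind_contrib G c d.

(* C_n(K) = { c | Ind(c) = k n for some integer k }  (for n = 0: Ind(c) = 0) *)
Definition Cn (G : gauss_diagram) (n : nat) : {set 'I_(ncross G)} :=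
  [set c | (n%:Z %| chord_index G c)%Z].

(* A state is s : {ffun chords -> bool} with s c = false for c \notin C_n; *)
(* for c \in C_n, s c = false is the 0-(A-)smoothing, true the 1-(B-)one.  *)
(* The resulting virtual link diagram is modelled by the graph whose       *)
(* vertices are the ends (p, false) = incoming, (p, true) = outgoing, of   *)
(* the knot at the 2m preimage points p; edges are the arcs of the knot    *)
(* between consecutive preimages ((p,out) -- (p+1,in)) together with the   *)
(* local connections at each real crossing with preimages p (tail), q:     *)
(*   unsmoothed:          (p,in)-(p,out),  (q,in)-(q,out)                  *)
(*   oriented smoothing:  (p,in)-(q,out),  (q,in)-(p,out)                  *)
(*   unoriented smoothing:(p,in)-(q,in),   (p,out)-(q,out)                 *)
(* The A-smoothing is the oriented one at a positive crossing and the      *)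
(* unoriented one at a negative crossing (and conversely for B).           *)
(* |S| is the number of connected components of this graph (1 if m = 0).  *)
Definition state (G : gauss_diagram) := {ffun 'I_(ncross G) -> bool}.

Definition admissible (G : gauss_diagram) (n : nat) (s : state G) : bool :=
  [forall c, (c \notin Cn G n) ==> ~~ s c].

Definition vertex (G : gauss_diagram) := ('I_((ncross G).*2) * bool)%type.

Definition upair (T : eqType) (x y u v : T) : bool :=
  ((x == u) && (y == v)) || ((x == v) && (y == u)).

Definition cross_edge (G : gauss_diagram) (n : nat) (s : state G)
    (c : 'I_(ncross G)) (x y : vertex G) : bool :=
  let p := @gtail G c in let q := @ghead G c in
  if c \notin Cn G n then
    upair _ x y (p, false) (p, true) || upair _ x y (q, false) (q, true)
  else if @gsign G c != s c then
    upair _ x y (p, false) (q, true) || upair _ x y (q, false) (p, true)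
  else
    upair _ x y (p, false) (q, false) || upair _ x y (p, true) (q, true).

Definition arc_edge (G : gauss_diagram) (x y : vertex G) : bool :=
  upair _ x y (x.1, true) (ordS x.1, false) || upair _ x y (y.1, true) (ordS y.1, false).

Definition state_rel (G : gauss_diagram) (n : nat) (s : state G) : rel (vertex G) :=
  fun x y => arc_edge G x y || [exists c, cross_edge G n s c x y].

Definition ncomp (G : gauss_diagram) (n : nat) (s : state G) : nat :=
  if ncross G == 0%N then 1%N else n_comp (state_rel G n s) predT.

(* Laurent polynomials as finite lists of monomials (exponent, coeff).    *)
Definition lpoly := seq (int * int).

Definition lmul (p q : lpoly) : lpoly :=
  [seq (x.1 + y.1, x.2 * y.2) | x <- p, y <- q].

Definition lpow (p : lpoly) (k : nat) : lpoly := iter k (lmul p) [:: (0, 1)].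

Definition lcoef (p : lpoly) (e : int) : int := \sum_(x <- p | x.1 == e) x.2.

Definition lsupp (p : lpoly) : seq int :=
  [seq e <- undup (map fst p) | lcoef p e != 0].

(* highest minus lowest occurring exponent (0 for the zero polynomial) *)
Definition lspan (p : lpoly) : int :=
  foldr Num.max 0 [seq e1 - e2 | e1 <- lsupp p, e2 <- lsupp p].

(* d = -A^2 - A^-2 (exponents of A) *)
Definition loopA : lpoly := [:: (2%:Z, -1); (-2, -1)].

Definition bracket (G : gauss_diagram) (n : nat) : lpoly :=
  flatten [seq lmul [:: ((#|[set c in Cn G n | ~~ s c]|)%:Z
                           - (#|[set c in Cn G n | s c]|)%:Z, 1)]
                    (lpow loopA (ncomp G n s).-1)
          | s : state G <- enum [pred s : state G | admissible G n s]].

(* V_K^n written in the variable u = t^(1/4): since A = t^(-1/4) = u^-1,  *)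
(* (-A^3)^(-w) A^e = (-1)^w u^(3w - e).                                   *)
Definition jonesV_u (G : gauss_diagram) (n : nat) : lpoly :=
  [seq (3 * writhe G - x.1, (-1) ^+ `|writhe G|%N * x.2) | x <- bracket G n].

(* span in t = (span in u = t^(1/4)) / 4 *)
Definition span_t (G : gauss_diagram) (n : nat) : rat :=
  (lspan (jonesV_u G n))%:~R / 4%:R.

(* Record, for every real crossing, whether it is kept, smoothed in the oriented way or
   smoothed in the unoriented way; the components of the resulting diagram are the connected
   components of a graph on the 4m ends of the knot at the preimages of the crossings.
   Changing one crossing only changes the two local edges among four ends, so passing between
   the two smoothings changes the number of components by at most one, and for a kept crossing
   one of its two smoothings does not increase it.  By induction on the smoothed crossings this
   gives |S_A| + |S_B| <= |C_n| + 2 for the all-A and the all-B states, and then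
   |S| <= |S_A| + #{B-smoothings of S} for every state S.  Hence the exponents of A occurring
   in <K>_n lie in an interval of length 4 |C_n|, i.e. the span in t is at most |C_n|. *)
From mathcomp Require Import all_boot all_order all_algebra.
From mathcomp Require Import zify.
Set Implicit Arguments. Unset Strict Implicit. Unset Printing Implicit Defensive.
Import Order.TTheory GRing.Theory Num.Theory.

Lemma upairC (T : eqType) (x y u v : T) : upair _ x y u v = upair _ y x u v.
Proof. by rewrite /upair orbC [(y == u) && _]andbC [(y == v) && _]andbC. Qed.

Definition add_edge (T : finType) (e : rel T) (x y : T) : rel T :=
  fun u v => e u v || upair _ u v x y.

Section AddEdge.
Variables (T : finType) (e : rel T) (x y : T).
Hypothesis sym_e : symmetric e.
Local Notation e' := (add_edge e x y).

Lemma add_edge_sym : symmetric e'.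
Proof. by move=> u v; rewrite /add_edge sym_e upairC. Qed.

Let csym : connect_sym e := sym_connect_sym sym_e.
Let csym' : connect_sym e' := sym_connect_sym add_edge_sym.

Lemma connect_add_edge_sub : subrel (connect e) (connect e').
Proof. by apply: connect_sub => u v euv; apply: connect1; rewrite /add_edge euv. Qed.

Lemma connect_add_edge_xy : connect e' x y.
Proof. by apply: connect1; rewrite /add_edge /upair !eqxx orbT. Qed.

Lemma in_closure2 z : (z \in closure e (pred2 x y)) = connect e z x || connect e z y.
Proof.
apply/idP/idP.
  case/pred0Pn => t /andP[ezt]; rewrite !inE /= in ezt *.
  by case/pred2P=> zt; move: ezt; rewrite zt => ->; rewrite ?orbT.
by case/orP=> h; apply/pred0Pn; [exists x | exists y]; rewrite /= !inE h ?eqxx ?orbT.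
Qed.

Let B := closure e (pred2 x y).

Lemma connect_add_edge_outside z w : z \notin B -> connect e' z w -> connect e z w.
Proof.
move=> zB /connectP[p pp ->]; elim: p z zB pp => //= v p IH z zB /andP[ezv pv].
have ezv' : e z v.
  case/orP: ezv => [//|/orP[]/andP[/eqP zx _]];
  by move: zB; rewrite in_closure2 zx connect0 ?orbT.
have vB : v \notin B by rewrite -(closure_closed csym _ ezv').
exact: connect_trans (connect1 ezv') (IH _ vB pv).
Qed.

Lemma in_closure2_add_edge z : (z \in B) = connect e' x z.
Proof.
apply/idP/idP.
  rewrite in_closure2 csym' => /orP[/connect_add_edge_sub//|h].
  by apply: connect_trans (connect_add_edge_sub h) _; rewrite csym' connect_add_edge_xy.
apply: contraLR => zB; rewrite csym'; apply/negP => h.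
by move: (zB); rewrite in_closure2 (connect_add_edge_outside zB h).
Qed.

Lemma n_comp_add_edge : n_comp e' predT + ~~ connect e x y = n_comp e predT.
Proof.
rewrite (n_compC B e) (n_compC (connect e' x) e') (n_comp_closure2 csym).
rewrite (n_comp_connect csym') add1n addSnnS addnC; congr (_ + _).
apply: eq_card => z; rewrite !inE -in_closure2_add_edge.
case zB: (z \in B); rewrite /= ?andbT ?andbF /roots /root //.
congr (odflt z _ == z); apply: eq_pick => w; apply/idP/idP.
  by apply: connect_add_edge_outside; rewrite zB.
exact: connect_add_edge_sub.
Qed.

Lemma connect_add_edge u v : connect e' u v =
  [|| connect e u v, connect e u x && connect e y v | connect e u y && connect e x v].
Proof.
apply/idP/idP; last first.
  have exy := connect_add_edge_xy; have eyx : connect e' y x by rewrite csym'.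
  case/or3P=> [/connect_add_edge_sub//|/andP[h1 h2]|/andP[h1 h2]];
    apply: connect_trans (connect_add_edge_sub h1) _;
    exact: connect_trans _ (connect_add_edge_sub h2).
pose Q v := [|| connect e u v, connect e u x && connect e y v
             | connect e u y && connect e x v].
suff clQ : closed e' Q.
  by move=> h; have := closed_connect clQ h; rewrite !unfold_in /Q /= connect0 => <-.
apply: (intro_closed csym') => a b; rewrite /add_edge !unfold_in /Q /=.
case/orP=> [eab|/orP[]/andP[/eqP-> /eqP->]].
- have cab := connect1 eab; case/or3P=> [h|/andP[-> h]|/andP[-> h]];
  by rewrite (connect_trans h cab) ?orbT.
- by case/or3P=> [->|/andP[->]|/andP[->]]; rewrite ?connect0 ?orbT.
- by case/or3P=> [->|/andP[->]|/andP[->]]; rewrite ?connect0 ?orbT.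
Qed.

End AddEdge.

Lemma n_comp_add_edge2 (T : finType) (e : rel T) (x1 y1 x2 y2 : T) :
  symmetric e ->
  n_comp (add_edge (add_edge e x1 y1) x2 y2) predT
    + ~~ [|| connect e x2 y2, connect e x2 x1 && connect e y1 y2
           | connect e x2 y1 && connect e x1 y2]
    + ~~ connect e x1 y1 = n_comp e predT.
Proof.
move=> sym_e; rewrite -connect_add_edge // n_comp_add_edge; last exact: add_edge_sym.
exact: n_comp_add_edge.
Qed.

(* The three perfect matchings of four points a, b, c, d, added to a graph whose connectivity
   among them is the equivalence relation C, yield v0, v1, v2 components. *)
Lemma perfect_matchings_n_comp (T : Type) (C : rel T) (a b c d : T) (v0 v1 v2 N : nat) :
  symmetric C -> transitive C ->
  v0 + ~~ [|| C c d, C c a && C b d | C c b && C a d] + ~~ C a b = N ->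
  v1 + ~~ [|| C c b, C c a && C d b | C c d && C a b] + ~~ C a d = N ->
  v2 + ~~ [|| C b d, C b a && C c d | C b c && C a d] + ~~ C a c = N ->
  [/\ v1 <= v2.+1, v2 <= v1.+1 & minn v1 v2 <= v0].
Proof.
move=> sC tC; have T3 x y z : C x y ==> C y z ==> C x z.
  by apply/implyP=> h1; apply/implyP; apply: tC h1.
move: (T3 a b c) (T3 b a c) (T3 a c b) (T3 a b d) (T3 b a d) (T3 a d b).
move: (T3 a c d) (T3 c a d) (T3 a d c) (T3 b c d) (T3 c b d) (T3 b d c).
rewrite ?(sC b a) ?(sC c a) ?(sC d a) ?(sC c b) ?(sC d b) ?(sC d c).
by case: (C a b); case: (C a c); case: (C a d); case: (C b c); case: (C b d);
   case: (C c d) => //=; split; lia.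
Qed.

Section Resolutions.
Variable G : gauss_diagram.
Local Notation m := (ncross G).
Local Notation V := (vertex G).

(* A resolution of a crossing: [None] keeps it, [Some true] is the oriented smoothing and
   [Some false] the unoriented one. *)
Definition local_pairs (c : 'I_m) (r : option bool) : (V * V) * (V * V) :=
  let p := gtail c in let q := ghead c in
  match r with
  | None => (((p, false), (p, true)), ((q, false), (q, true)))
  | Some true => (((p, false), (q, true)), ((q, false), (p, true)))
  | Some false => (((p, false), (q, false)), ((p, true), (q, true)))
  end.

Definition local_edge (c : 'I_m) (r : option bool) : rel V := fun x y =>
  upair _ x y (local_pairs c r).1.1 (local_pairs c r).1.2
  || upair _ x y (local_pairs c r).2.1 (local_pairs c r).2.2.

Definition res_rel (k : 'I_m -> option bool) : rel V :=
  fun x y => arc_edge G x y || [exists c, local_edge c (k c) x y].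

Definition res_rel_but (k : 'I_m -> option bool) (c : 'I_m) : rel V :=
  fun x y => arc_edge G x y || [exists d, (d != c) && local_edge d (k d) x y].

(* Locked: letting conversion unfold [n_comp] makes failed tactics diverge. *)
Fact ncomp_res_key : unit. Proof. exact: tt. Qed.
Definition ncomp_res (k : 'I_m -> option bool) : nat :=
  locked_with ncomp_res_key (n_comp (res_rel k) predT).
Lemma ncomp_resE k : ncomp_res k = n_comp (res_rel k) predT.
Proof. exact: unlock. Qed.

Definition set_res (k : 'I_m -> option bool) (c : 'I_m) (r : option bool) : 'I_m -> option bool :=
  fun d => if d == c then r else k d.

Definition smooth_on (X : {set 'I_m}) (f : 'I_m -> bool) (k : 'I_m -> option bool) :
  'I_m -> option bool := fun d => if d \in X then Some (f d) else k d.

Lemma arc_edge_sym : symmetric (arc_edge G).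
Proof. by move=> x y; rewrite /arc_edge orbC; congr (_ || _); apply: upairC. Qed.

Lemma local_edge_sym c r : symmetric (local_edge c r).
Proof. by move=> x y; rewrite /local_edge; congr (_ || _); apply: upairC. Qed.

Lemma res_rel_sym k : symmetric (res_rel k).
Proof.
move=> x y; rewrite /res_rel arc_edge_sym; congr (_ || _).
by apply: eq_existsb => c; rewrite local_edge_sym.
Qed.

Lemma res_rel_but_sym k c : symmetric (res_rel_but k c).
Proof.
move=> x y; rewrite /res_rel_but arc_edge_sym; congr (_ || _).
by apply: eq_existsb => d; rewrite local_edge_sym.
Qed.

Lemma eq_ncomp_res k k' : k =1 k' -> ncomp_res k = ncomp_res k'.
Proof.
move=> kk; rewrite !ncomp_resE; apply: eq_n_comp; apply: eq_connect => x y.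
by rewrite /res_rel; congr (_ || _); apply: eq_existsb => c; rewrite kk.
Qed.

Lemma set_res_id k c : set_res k c (k c) =1 k.
Proof. by move=> d; rewrite /set_res; case: eqP => [->|]. Qed.

Lemma res_rel_set_res k c r : res_rel (set_res k c r) =2
  add_edge (add_edge (res_rel_but k c) (local_pairs c r).1.1 (local_pairs c r).1.2)
           (local_pairs c r).2.1 (local_pairs c r).2.2.
Proof.
move=> x y; rewrite /res_rel /add_edge /res_rel_but /set_res.
have -> : [exists d, local_edge d (if d == c then r else k d) x y] =
          local_edge c r x y || [exists d, (d != c) && local_edge d (k d) x y].
  apply/existsP/orP => [[d]|[h|/existsP[d /andP[dc h]]]].
  - by case: eqP => [-> h|/eqP dc h]; [left | right; apply/existsP; exists d; rewrite dc].
  - by exists c; rewrite eqxx.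
  - by exists d; rewrite (negbTE dc).
rewrite /local_edge; set A := arc_edge G x y; set E := [exists d, _].
set U1 := upair _ x y _ _; set U2 := upair _ x y _ _.
by case: A; case: E; case: U1; case: U2.
Qed.

Lemma ncomp_res_set k c :
  [/\ ncomp_res (set_res k c (Some true)) <= (ncomp_res (set_res k c (Some false))).+1,
      ncomp_res (set_res k c (Some false)) <= (ncomp_res (set_res k c (Some true))).+1 &
      minn (ncomp_res (set_res k c (Some true))) (ncomp_res (set_res k c (Some false)))
        <= ncomp_res (set_res k c None)].
Proof.
pose e r := add_edge (add_edge (res_rel_but k c) (local_pairs c r).1.1 (local_pairs c r).1.2)
                    (local_pairs c r).2.1 (local_pairs c r).2.2.
have E r : ncomp_res (set_res k c r) = n_comp (e r) predT.
  by rewrite ncomp_resE; apply: eq_n_comp; apply: eq_connect; apply: res_rel_set_res.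
have F r := n_comp_add_edge2 (local_pairs c r).1.1 (local_pairs c r).1.2
              (local_pairs c r).2.1 (local_pairs c r).2.2 (res_rel_but_sym k c).
have := F (Some false); have := F (Some true); have := F None; rewrite -/(e _) -!E /=.
exact/perfect_matchings_n_comp/connect_trans/sym_connect_sym/res_rel_but_sym.
Qed.

Lemma ncomp_res_switch k c b :
  ncomp_res (set_res k c (Some b)) <= (ncomp_res (set_res k c (Some (~~ b)))).+1.
Proof. by have [h1 h2 _] := ncomp_res_set k c; case: b => /=. Qed.

Lemma ncomp_res_smoothing_min k c b :
  minn (ncomp_res (set_res k c (Some b))) (ncomp_res (set_res k c (Some (~~ b))))
    <= ncomp_res (set_res k c None).
Proof.
have [_ _ h] := ncomp_res_set k c.
by case: b => /=; last rewrite minnC.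
Qed.

Lemma ncomp_res_resmooth1 k c r : r != None -> k c != None ->
  ncomp_res (set_res k c r) <= (ncomp_res k).+1.
Proof.
rewrite -[in X in _ <= X.+1](eq_ncomp_res (set_res_id k c)).
case: r => [b _|]; last by case/eqP.
case: (k c) => [b' _|]; last by case/eqP.
case: b; case: b'; [exact: leqnSn | exact: ncomp_res_switch k c true
                   | exact: ncomp_res_switch k c false | exact: leqnSn].
Qed.

Lemma ncomp_res_resmooth_on (D : {set 'I_m}) k k' :
  (forall d, d \notin D -> k d = k' d) ->
  {in D, forall d, k d != None} -> {in D, forall d, k' d != None} ->
  ncomp_res k <= ncomp_res k' + #|D|.
Proof.
move Dn : #|D| => n; elim: n D k' Dn => [|n IH] D k' Dn out kD k'D.
  move/eqP: Dn; rewrite cards_eq0 => /eqP D0; rewrite addn0 (@eq_ncomp_res k k') //.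
  by move=> d; apply: out; rewrite D0 inE.
have [d dD] : exists d, d \in D by apply/set0Pn; rewrite -cards_eq0 Dn.
have D'n : #|D :\ d| = n by move: Dn; rewrite (cardsD1 d D) dD add1n => -[].
have le1 : ncomp_res k <= ncomp_res (set_res k' d (k d)) + n.
  apply: (IH (D :\ d)) => // x; rewrite !inE /set_res.
  - by rewrite negb_and negbK; case: eqP => [->|_ /= /out].
  - by case/andP=> _; apply: kD.
  - by case/andP=> /negbTE-> xD; apply: k'D.
have := ncomp_res_resmooth1 (kD d dD) (k'D d dD); move: le1; lia.
Qed.

Lemma ncomp_res_dual_smoothings (X : {set 'I_m}) f k : {in X, forall d, k d = None} ->
  ncomp_res (smooth_on X f k) + ncomp_res (smooth_on X (negb \o f) k)
    <= #|X| + 2 * ncomp_res k.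
Proof.
move Xn : #|X| => n; elim: n X f k Xn => [|n IH] X f k Xn kX.
  move/eqP: Xn; rewrite cards_eq0 => /eqP X0.
  have e g : smooth_on X g k =1 k by move=> d; rewrite /smooth_on X0 inE.
  by rewrite !(eq_ncomp_res (e _)) add0n mul2n -addnn.
have [x xX] : exists x, x \in X by apply/set0Pn; rewrite -cards_eq0 Xn.
have X'n : #|X :\ x| = n by move: Xn; rewrite (cardsD1 x X) xX add1n => -[].
wlog hA : f / ncomp_res (set_res k x (Some (f x))) <= ncomp_res k.
  move=> W; have := ncomp_res_smoothing_min k x (f x).
  rewrite -[ncomp_res (set_res k x None)](eq_ncomp_res (k := k)); last first.
    by move=> d; rewrite /set_res; case: eqP => [->|//]; rewrite kX.
  rewrite geq_min => /orP[/W //|/(W (negb \o f)) h].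
  have e : smooth_on X (negb \o (negb \o f)) k =1 smooth_on X f k.
    by move=> d; rewrite /smooth_on /= negbK.
  by rewrite addnC -(eq_ncomp_res e).
set kA := set_res k x (Some (f x)); set B := smooth_on X (negb \o f) k.
have eA : smooth_on (X :\ x) f kA =1 smooth_on X f k.
  by move=> d; rewrite /smooth_on /kA /set_res !inE; case: eqVneq => [->|]; rewrite ?xX.
have eB : smooth_on (X :\ x) (negb \o f) kA =1 set_res B x (Some (f x)).
  by move=> d; rewrite /smooth_on /B /kA /set_res !inE; case: eqVneq.
have kAX : {in X :\ x, forall d, kA d = None}.
  by move=> d; rewrite !inE /kA /set_res => /andP[/negbTE-> /kX].
have IHx := IH (X :\ x) f kA X'n kAX.
rewrite (eq_ncomp_res eA) (eq_ncomp_res eB) in IHx.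
have sw : ncomp_res B <= (ncomp_res (set_res B x (Some (f x)))).+1.
  have eB' : set_res (set_res B x (Some (f x))) x (B x) =1 B.
    by move=> d; rewrite /set_res; case: eqP => [->|].
  rewrite -(eq_ncomp_res eB'); apply: ncomp_res_resmooth1; rewrite /set_res ?eqxx //.
  by rewrite /B /smooth_on xX.
rewrite -/kA in hA; move: hA IHx sw; lia.
Qed.

Lemma ncomp_res_gt0 k : 0 < m -> 0 < ncomp_res k.
Proof.
move=> m0; have m2 : 0 < m.*2 by rewrite double_gt0.
rewrite ncomp_resE; apply/card_gt0P; exists (fingraph.root (res_rel k) (Ordinal m2, false)).
by rewrite !inE andbT; apply/roots_root/sym_connect_sym/res_rel_sym.
Qed.

Lemma gauss_point_endpoint (p : 'I_m.*2) : valid_gauss G ->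
  exists c, (gtail c == p) || (ghead c == p).
Proof.
move=> vG; have card_ends : #|{: 'I_m.*2}| <= #|{: 'I_m * bool}|.
  by rewrite card_prod !card_ord card_bool muln2.
have /codomP[[c b] ->] := inj_card_onto vG card_ends p.
by exists c; case: b; rewrite eqxx ?orbT.
Qed.

Lemma ncomp_res_unsmoothed : valid_gauss G -> 0 < m -> ncomp_res (fun _ => None) = 1.
Proof.
move=> vG m0; have m2 : 0 < m.*2 by rewrite double_gt0.
set R := res_rel (fun _ => None); set v0 : V := (Ordinal m2, false).
have through (p : 'I_m.*2) : R (p, false) (p, true).
  have [c hc] := gauss_point_endpoint p vG; apply/orP; right; apply/existsP; exists c.
  by rewrite /local_edge /upair /=; case/orP: hc => /eqP->; rewrite !eqxx ?orbT.
have along (p : 'I_m.*2) : R (p, true) (ordS p, false).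
  by apply/orP; left; rewrite /arc_edge /upair /= !eqxx.
have to_in i (lti : i < m.*2) : connect R v0 (Ordinal lti, false).
  elim: i lti => [|i IH] lti; first by apply: eq_connect0; congr (_, _); apply: val_inj.
  have lti' : i < m.*2 by apply: ltnW.
  apply: connect_trans (connect_trans (IH lti') (connect1 (through _))) (connect1 _).
  have -> : Ordinal lti = ordS (Ordinal lti') by apply: val_inj; rewrite /= modn_small.
  exact: along.
have to_all (v : V) : connect R v0 v.
  case: v => [[i lti] []]; last exact: to_in.
  exact: connect_trans (to_in i lti) (connect1 (through _)).
rewrite ncomp_resE (@eq_n_comp_r _ _ predT (connect R v0)) => [|v]; last by rewrite !inE to_all.
exact/n_comp_connect/sym_connect_sym/res_rel_sym.
Qed.

Lemma ncomp_res_smooth_on_le (X : {set 'I_m}) f f' k :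
  ncomp_res (smooth_on X f k) <= ncomp_res (smooth_on X f' k) + #|[set d in X | f d != f' d]|.
Proof.
apply: ncomp_res_resmooth_on => d; rewrite ?inE /smooth_on.
- by case: (d \in X) => //= /negbNE/eqP->.
- by case/andP=> ->.
- by case/andP=> ->.
Qed.

Variable n : nat.

Definition res_of_state (s : state G) : 'I_m -> option bool :=
  smooth_on (Cn G n) (fun c => gsign c != s c) (fun _ => None).

Lemma ncomp_res_of_state s : 0 < m -> ncomp G n s = ncomp_res (res_of_state s).
Proof.
move=> m0; rewrite /ncomp (negbTE (lt0n_neq0 m0)) ncomp_resE.
apply: eq_n_comp; apply: eq_connect => x y; rewrite /state_rel /res_rel; congr (_ || _).
apply: eq_existsb => c; rewrite /cross_edge /local_edge /res_of_state /smooth_on.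
by case: (c \in Cn G n); case: (gsign c != s c).
Qed.

Lemma ncomp_gt0 s : 0 < ncomp G n s.
Proof.
have [/eqP m0|m0] := posnP m; first by rewrite /ncomp m0.
by rewrite ncomp_res_of_state //; apply: ncomp_res_gt0.
Qed.

Lemma ncomp_sum_le s s' : valid_gauss G ->
  ncomp G n s + ncomp G n s'
    <= #|Cn G n| + 2 + #|[set c in Cn G n | s c]| + #|[set c in Cn G n | ~~ s' c]|.
Proof.
move=> vG; have [/eqP m0|m0] := posnP m; first by rewrite /ncomp m0 addn2.
rewrite !ncomp_res_of_state //.
have := @ncomp_res_dual_smoothings (Cn G n) (@gsign G) (fun _ => None) (fun _ _ => erefl).
rewrite ncomp_res_unsmoothed //.
have := ncomp_res_smooth_on_le (Cn G n) (fun c => gsign c != s c) (@gsign G) (fun _ => None).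
have := ncomp_res_smooth_on_le (Cn G n) (fun c => gsign c != s' c) (negb \o @gsign G)
          (fun _ => None).
have -> : [set d in Cn G n | (gsign d != s d) != gsign d] = [set c in Cn G n | s c].
  by apply/setP => d; rewrite !inE; case: (gsign d); case: (s d).
have -> : [set d in Cn G n | (gsign d != s' d) != ~~ gsign d] = [set c in Cn G n | ~~ s' c].
  by apply/setP => d; rewrite !inE; case: (gsign d); case: (s' d).
rewrite /res_of_state => h' h hAB.
apply: leq_trans (leq_add h h') _.
rewrite addnACA -(addnA (#|Cn G n| + 2)) leq_add2r.
by rewrite muln1 in hAB.
Qed.

End Resolutions.

Local Open Scope ring_scope.

Lemma mem_lpow_loopA (j : nat) (x : int * int) : x \in lpow loopA j ->
  - (2 * j)%:Z <= x.1 <= (2 * j)%:Z.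
Proof.
elim: j x => [|j IH] x /=; first by rewrite inE => /eqP->.
case/allpairsP => [[a b]] /= [ha /IH hb ->] /=.
by move: ha hb; rewrite !inE => /orP[]/eqP-> /=; lia.
Qed.

Lemma mem_bracket G n (x : int * int) : x \in bracket G n ->
  exists s : state G,
    let e := (#|[set c in Cn G n | ~~ s c]|)%:Z - (#|[set c in Cn G n | s c]|)%:Z in
    e - (2 * (ncomp G n s).-1)%:Z <= x.1 <= e + (2 * (ncomp G n s).-1)%:Z.
Proof.
case/flattenP => l /mapP[s _ ->] /allpairsP[[a b]] /= [ha /mem_lpow_loopA hb ->] /=.
by exists s; move: ha hb; rewrite inE => /eqP-> /=; lia.
Qed.

Lemma card_state_split G n (s : state G) :
  (#|[set c in Cn G n | s c]| + #|[set c in Cn G n | ~~ s c]| = #|Cn G n|)%N.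
Proof.
rewrite -(cardsID [set c | s c] (Cn G n)).
by congr (_ + _)%N; apply: eq_card => c; rewrite !inE andbC.
Qed.

Lemma bracket_exponent_diff G n (x y : int * int) : valid_gauss G ->
  x \in bracket G n -> y \in bracket G n -> y.1 - x.1 <= 4 * (#|Cn G n|)%:Z.
Proof.
move=> vG /mem_bracket[s hs] /mem_bracket[s' hs'].
have := ncomp_sum_le n s' s vG; have := ncomp_gt0 n s; have := ncomp_gt0 n s'.
have := card_state_split n s; have := card_state_split n s'.
move: hs hs' => /=; move: (ncomp G n s) (ncomp G n s') => c c'.
move: #|[set c in Cn G n | s c]| #|[set c in Cn G n | ~~ s c]| => b a.
move: #|[set c in Cn G n | s' c]| #|[set c in Cn G n | ~~ s' c]| => b' a'.
move: #|Cn G n| => k; lia.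
Qed.

Lemma lspan_le (p : lpoly) (M : int) : 0 <= M ->
  {in lsupp p &, forall e1 e2, e1 - e2 <= M} -> lspan p <= M.
Proof.
move=> M0 hM; rewrite /lspan.
have -> (l : seq int) : foldr Num.max 0 l = \big[Num.max/0]_(z <- l) z.
  by elim: l => [|z l IH]; rewrite ?big_nil // big_cons -IH.
rewrite big_seq; apply: bigmax_le => // z /allpairsP[[e1 e2] [h1 h2 ->]].
exact: hM.
Qed.

Lemma mem_lsupp_jonesV_u G n e : e \in lsupp (jonesV_u G n) ->
  exists2 x, x \in bracket G n & e = 3 * writhe G - x.1.
Proof. by rewrite mem_filter mem_undup => /andP[_ /mapP[y /mapP[x hx ->] ->]]; exists x. Qed.

Theorem proposition4p2 (G : gauss_diagram) (n : nat) (HG : valid_gauss G) :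
  span_t G n <= (#|Cn G n|)%:R.
Proof.
have span_le : lspan (jonesV_u G n) <= 4 * (#|Cn G n|)%:Z.
  apply: lspan_le => // e1 e2 /mem_lsupp_jonesV_u[x hx ->] /mem_lsupp_jonesV_u[y hy ->].
  have := bracket_exponent_diff HG hx hy.
  by move: x.1 y.1 (writhe G) #|Cn G n| => a b w k; lia.
rewrite /span_t ler_pdivrMr ?ltr0n // mulrC.
by move: span_le; rewrite -(ler_int rat) intrM.
Qed.
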